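(* Let $n,m\ge 1$ and let $\mathbf{K}_1,\dots,\mathbf{K}_m\in\mathbb{R}^{n,n}$. For any ordering of these matrices, i.e. any permutation $\pi$ of $\{1,\dots,m\}$, form the product $\mathbf{K}^{\pi}=\mathbf{K}_{\pi(m)}\mathbf{K}_{\pi(m-1)}\cdots\mathbf{K}_{\pi(1)}$, and for a fixed index $i$ define the block sensitivity of $\mathbf{K}_i$ in this product as $\mathrm{BS}_i^{\pi}=\left|\,\left|\frac{\partial\mathbf{K}^{\pi}}{\partial\mathbf{K}_i}\right|\,\right|$ (absolute value of the determinant of the Jacobian of $\mathbf{K}^\pi$ with respect to the factor $\mathbf{K}_i$, others held fixed). Then $\mathrm{BS}_i^{\pi}$ does not depend on $\pi$; that is, the block sensitivity of a factor is determined by the matrices alone and not by the position of $\mathbf{K}_i$ in the product.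
   Context: For $\mathbf{A}=(a_{i,j})\in\mathbb{R}^{p,q}$, $\operatorname{vec}(\mathbf{A})$ is the row-major vectorization $(a_{1,1},\dots,a_{1,q},\dots,a_{p,1},\dots,a_{p,q})^{\mathrm T}$. The Jacobian $\frac{\partial\mathbf{K}^{\pi}}{\partial\mathbf{K}_i}$ is the $n^2\times n^2$ Jacobian matrix of the map $\operatorname{vec}(\mathbf{X})\mapsto\operatorname{vec}(\mathbf{P}\mathbf{X}\mathbf{Q})$, where $\mathbf{P}$ is the product of the factors to the left of $\mathbf{K}_i$ in $\mathbf{K}^\pi$ and $\mathbf{Q}$ the product of the factors to its right (empty products are the identity). $|\cdot|$ denotes the determinant and the outer bars the absolute value. *)

From HB Require Import structures.
From mathcomp Require Import all_boot all_order all_algebra all_fingroup.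
From mathcomp Require Import all_classical all_reals.
Set Implicit Arguments. Unset Strict Implicit. Unset Printing Implicit Defensive.
Import Order.TTheory GRing.Theory Num.Theory.
Local Open Scope ring_scope.

(* Factors are indexed by 'I_m (0-based); the product is
   K^pi = K (pi (m-1)) *m ... *m K (pi 0).
   K_i sits at position j0 = (pi^-1)%g i. *)

Definition left_prod (R : realType) (n m : nat) (K : 'I_m -> 'M[R]_n)
  (pi : 'S_m) (i : 'I_m) : 'M[R]_n :=
  \big[mulmx/1%:M]_(j <- rev (enum 'I_m) | ((pi^-1)%g i < j)%N) K (pi j).

Definition right_prod (R : realType) (n m : nat) (K : 'I_m -> 'M[R]_n)
  (pi : 'S_m) (i : 'I_m) : 'M[R]_n :=
  \big[mulmx/1%:M]_(j <- rev (enum 'I_m) | (j < (pi^-1)%g i)%N) K (pi j).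

(* Jacobian (n^2 x n^2, acting on column vectors) of the linear map
   vec(X) |-> vec(P X Q), with row-major vec = mathcomp's mxvec.
   lin_mx f satisfies mxvec (f X) = mxvec X *m lin_mx f (row vectors),
   so the column-convention Jacobian is its transpose. *)
Definition jacobian (R : realType) (n m : nat) (K : 'I_m -> 'M[R]_n)
  (pi : 'S_m) (i : 'I_m) : 'M[R]_(n * n) :=
  (lin_mx (fun X : 'M[R]_n => left_prod K pi i *m X *m right_prod K pi i))^T.

Definition block_sensitivity (R : realType) (n m : nat) (K : 'I_m -> 'M[R]_n)
  (pi : 'S_m) (i : 'I_m) : R :=
  `| \det (jacobian K pi i) |.

From HB Require Import structures.
From mathcomp Require Import all_boot all_order all_algebra all_fingroup.
From mathcomp Require Import all_classical all_reals.
Set Implicit Arguments. Unset Strict Implicit. Unset Printing Implicit Defensive.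
Import Order.TTheory GRing.Theory Num.Theory.
Local Open Scope ring_scope.

(* The Jacobian determinant of X |-> P X Q on n x n matrices is
   (det P * det Q)^n: in the row-major basis X |-> X Q is block diagonal with
   n copies of Q, and X |-> P X is conjugate, through the involution
   X |-> X^T, to X |-> X P^T.  In K^pi the factors P and Q are the products of
   the K_k standing left and right of K_i, so det P * det Q is the product of
   the det K_k over k != i, whatever the ordering pi. *)

Lemma index_allpairs (T1 T2 : eqType) (s1 : seq T1) (s2 : seq T2) x y :
  x \in s1 -> y \in s2 ->
  index (x, y) [seq (a, b) | a <- s1, b <- s2] = (index x s1 * size s2 + index y s2)%N.
Proof.
elim: s1 => [|a s1 IH] //= xin yin; rewrite index_cat.
have [->|nxa] := eqVneq x a.
  have inj_pair : injective (pair a : T2 -> T1 * T2) by move=> u v [].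
  by rewrite (mem_map inj_pair) yin (index_map inj_pair).
case: ifP => [/mapP [b _ [xa _]]|_]; first by rewrite xa eqxx in nxa.
rewrite size_map IH ?mulSn ?addnA //.
by move: xin; rewrite inE (negbTE nxa).
Qed.

Lemma enum_rankE (T : finType) (x : T) : enum_rank x = index x (enum T) :> nat.
Proof.
apply/eqP; rewrite -(nth_uniq x _ _ (enum_uniq T)) ?nth_enum_rank ?nth_index ?mem_enum //.
  by rewrite -cardE ltn_ord.
by rewrite index_mem mem_enum.
Qed.

Lemma mxvec_indexE m n (i : 'I_m) (j : 'I_n) : mxvec_index i j = (i * n + j)%N :> nat.
Proof.
rewrite /= enum_rankE enumT unlock /= /prod_enum index_allpairs ?mem_enum //.
by rewrite !index_enum_ord size_enum_ord.
Qed.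

(* 'I_(m.+1 * n) is convertible to 'I_(n + m * n), the index type of
   block decompositions with an n x n upper-left block. *)
Lemma mxvec_index_ord0 m n (j : 'I_n) :
  mxvec_index (ord0 : 'I_m.+1) j = lshift (m * n) j :> 'I_(m.+1 * n).
Proof. by apply: ord_inj; rewrite mxvec_indexE. Qed.

Lemma mxvec_index_lift0 m n (i : 'I_m) (j : 'I_n) :
  mxvec_index (lift ord0 i) j = rshift n (mxvec_index i j) :> 'I_(m.+1 * n).
Proof.
apply: ord_inj; rewrite mxvec_indexE -[RHS]/(n + mxvec_index i j)%N.
by rewrite mxvec_indexE mulSn addnA.
Qed.

Section LinMx.
Variable R : comNzRingType.

Lemma row_lin_mx m1 n1 m2 n2 (f : 'M[R]_(m1, n1) -> 'M[R]_(m2, n2)) k :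
  row k (lin_mx f) = mxvec (f (vec_mx (delta_mx 0 k))).
Proof. by apply/rowP => l; rewrite !mxE. Qed.

Lemma eq_lin_mx m1 n1 m2 n2 (f g : 'M[R]_(m1, n1) -> 'M[R]_(m2, n2)) :
  f =1 g -> lin_mx f = lin_mx g.
Proof. by move=> fg; apply/matrixP => a b; rewrite !mxE /= fg. Qed.

Lemma lin_mx_id m n : lin_mx (@id 'M[R]_(m, n)) = 1%:M.
Proof. by apply/row_matrixP => k; rewrite row_lin_mx vec_mxK rowE mulmx1. Qed.

Lemma lin_mx_comp m1 n1 m2 n2 m3 n3 (g : 'M[R]_(m1, n1) -> 'M[R]_(m2, n2))
    (f : {linear 'M[R]_(m2, n2) -> 'M[R]_(m3, n3)}) :
  lin_mx g *m lin_mx f = lin_mx (f \o g).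
Proof. by apply/row_matrixP => k; rewrite row_mul !row_lin_mx mul_vec_lin. Qed.

Lemma det_mxvec_blockdiag m n (Q : 'M[R]_n) (A : 'M[R]_(m * n)) :
  (forall i i' j j', A (mxvec_index i j) (mxvec_index i' j') = (i == i')%:R * Q j j') ->
  \det A = \det Q ^+ m.
Proof.
elim: m A => [|m IH] A HA; first by rewrite det_mx00 expr0.
rewrite -[A : 'M_(n + m * n)]submxK.
have -> : dlsubmx (A : 'M_(n + m * n)) = 0.
  apply/matrixP => a b; rewrite !mxE; case/mxvec_indexP: a => i j.
  by rewrite -mxvec_index_lift0 -mxvec_index_ord0 HA mul0r.
rewrite det_ublock exprS; congr (_ * _).
  congr (\det _); apply/matrixP => j j'.
  by rewrite !mxE -!mxvec_index_ord0 HA eqxx mul1r.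
apply: IH => i i' j j'.
by rewrite !mxE -!mxvec_index_lift0 HA (inj_eq lift_inj).
Qed.

Lemma lin_mulmxrE m n p (Q : 'M[R]_(n, p)) (i i' : 'I_m) j j' :
  lin_mulmxr Q (mxvec_index i j) (mxvec_index i' j') = (i == i')%:R * Q j j'.
Proof.
rewrite !mxE /= vec_mx_delta mxvecE mxE (bigD1 j) //= big1 ?addr0; last first.
  by move=> k /negbTE nkj; rewrite mxE nkj andbF mul0r.
by rewrite mxE eqxx andbT eq_sym; case: eqP; rewrite ?mul1r ?mul0r.
Qed.

Lemma det_lin_mulmxr m n (Q : 'M[R]_n) :
  \det (lin_mulmxr Q : 'M_(m * n)) = \det Q ^+ m.
Proof. exact/det_mxvec_blockdiag/lin_mulmxrE. Qed.

Lemma det_lin_mulmx n (P : 'M[R]_n) :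
  \det (lin_mulmx P : 'M_(n * n)) = \det P ^+ n.
Proof.
pose T := lin_mx (@trmx R n n).
have TT : T *m T = 1%:M.
  by rewrite lin_mx_comp -lin_mx_id; apply: eq_lin_mx; apply: trmxK.
have -> : lin_mulmx P = T *m lin_mulmxr P^T *m T.
  by rewrite !lin_mx_comp; apply: eq_lin_mx => X /=; rewrite trmx_mul !trmxK.
by rewrite !det_mulmx det_lin_mulmxr det_tr mulrC mulrA -det_mulmx TT det1 mul1r.
Qed.

Lemma det_lin_mx_sandwich n (P Q : 'M[R]_n) :
  \det (lin_mx (fun X : 'M[R]_n => P *m X *m Q)) = (\det P * \det Q) ^+ n.
Proof.
rewrite (@eq_lin_mx _ _ _ _ _ (mulmxr Q \o mulmx P)) // -lin_mx_comp.
by rewrite det_mulmx det_lin_mulmx det_lin_mulmxr exprMn.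
Qed.

End LinMx.

Lemma det_big_mulmx (R : comNzRingType) n (I : Type) (r : seq I) (P : pred I)
    (F : I -> 'M[R]_n) :
  \det (\big[mulmx/1%:M]_(j <- r | P j) F j) = \prod_(j <- r | P j) \det (F j).
Proof. exact: (big_morph _ (@det_mulmx R n) (det1 R n)). Qed.

Lemma det_left_right_prod (R : realType) n m (K : 'I_m -> 'M[R]_n) pi i :
  \det (left_prod K pi i) * \det (right_prod K pi i) = \prod_(k | k != i) \det (K k).
Proof.
rewrite !det_big_mulmx !big_rev !big_enum_cond /= [RHS](reindex_inj (@perm_inj _ pi)) /=.
set j0 := (pi^-1)%g i.
rewrite [RHS](eq_bigl (fun j => j != j0)) => [|j]; last first.
  by rewrite -[in RHS](inj_eq (@perm_inj _ pi)) permKV.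
rewrite [RHS](bigID (fun j : 'I_m => (j0 < j)%N)) /=.
by congr (_ * _); apply: eq_bigl => j; rewrite -val_eqE /=; case: ltngtP.
Qed.

Lemma block_sensitivityE (R : realType) n m (K : 'I_m -> 'M[R]_n) pi i :
  block_sensitivity K pi i = `|\prod_(k | k != i) \det (K k)| ^+ n.
Proof.
by rewrite /block_sensitivity /jacobian det_tr det_lin_mx_sandwich det_left_right_prod normrX.
Qed.

Theorem theorem6 (R : realType) (n m : nat) (hn : (1 <= n)%N) (hm : (1 <= m)%N)
  (K : 'I_m -> 'M[R]_n) (i : 'I_m) (pi sigma : 'S_m) :
  block_sensitivity K pi i = block_sensitivity K sigma i.
Proof. by rewrite !block_sensitivityE. Qed.
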